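(* Let $T$ be a rooted binary phylogenetic $X$-tree with $|X|\geq 3$ and strictly positive edge lengths, and let $X'\subset X$ be such that the ranking $\pi_T$ is strict and reversible with respect to $X'$ (with induced subtree $\widetilde{T}=T_{\widetilde X}$, $\widetilde{X}=X\setminus X'$). Then for every cherry $[x_i,x_j]$ of $T$ we have $|X'\cap\{x_i,x_j\}|\geq 1$, i.e. at least one leaf of every cherry is deleted.
   Context: A rooted binary phylogenetic $X$-tree ($X$ a finite nonempty set, $|X|=n$) is a rooted tree whose root $\rho$ has in-degree 0 and out-degree 2, all edges directed away from $\rho$, all other interior vertices have in-degree 1 and out-degree 2, and whose leaves are bijectively labelled by $X$ (for $|X|=1$ the tree may be a single vertex). Every edge $e$ has a strictly positive length $\lambda_e$. The Fair Proportion index of $x\in X$ is $FP_T(x)=\sum_{e\in P(T;\rho,x)}\lambda_e/D_e$, where $P(T;\rho,x)$ is the path from $\rho$ to $x$ and $D_e$ is the number of leaves descended from $e$. A cherry is a pair of leaves with the same parent. For $Y\subseteq X$, the induced subtree $T_Y$ is obtained from the minimal subtree of $T$ connecting $Y$ by suppressing all non-root vertices of in- and out-degree 1, adding the lengths of merged edges; if the root then has out-degree 1, it and its incident edge are deleted. The ranking $\pi_T$ orders $X$ by decreasing $FP_T$; it is strict if all values $FP_T(x)$, $x\in X$, are pairwise distinct. For $X'\subset X$, $\widetilde X=X\setminus X'$ and $\widetilde T=T_{\widetilde X}$, a strict ranking $\pi_T$ is reversible with respect to $X'$ if for all distinct $x_i,x_j\in\widetilde X$, $FP_T(x_i)>FP_T(x_j)$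 implies $FP_{\widetilde T}(x_i)<FP_{\widetilde T}(x_j)$. *)

From HB Require Import structures.
From mathcomp Require Import all_boot all_order all_algebra.
Set Implicit Arguments. Unset Strict Implicit. Unset Printing Implicit Defensive.
Import Order.TTheory GRing.Theory Num.Theory.
Local Open Scope ring_scope.

(* A rooted binary phylogenetic tree with leaf labels in nat and edge lengths
   in R.  [PLeaf x] is a single vertex labelled x; [PNode l a r b] is a vertex
   with out-degree 2 whose edge to the subtree [l] has length [a] and whose
   edge to the subtree [r] has length [b]. *)
Inductive ptree (R : Type) : Type :=
| PLeaf of nat
| PNode of ptree R & R & ptree R & R.

Arguments PLeaf {R} _.

Section PTree.
Variable R : realFieldType.

Fixpoint leaves (t : ptree R) : seq nat :=
  match t with
  | PLeaf x => [:: x]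
  | PNode l _ r _ => leaves l ++ leaves r
  end.

Definition well_labelled (t : ptree R) : bool := uniq (leaves t).

Fixpoint pos_lengths (t : ptree R) : bool :=
  match t with
  | PLeaf _ => true
  | PNode l a r b => [&& 0 < a, 0 < b, pos_lengths l & pos_lengths r]
  end.

(* Fair Proportion index: sum over the edges e on the root-to-x path of
   lambda_e / D_e, D_e = number of leaves below e. *)
Fixpoint FP (t : ptree R) (x : nat) : R :=
  match t with
  | PLeaf _ => 0
  | PNode l a r b =>
      if x \in leaves l then a / (size (leaves l))%:R + FP l x
      else if x \in leaves r then b / (size (leaves r))%:R + FP r x
      else 0
  end.

(* Restriction to the leaves satisfying Y: returns the restricted subtree
   together with the length that must be added to the edge entering it
   (coming from suppressed vertices of in- and out-degree 1). *)
Fixpoint restrict (Y : pred nat) (t : ptree R) : option (ptree R * R) :=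
  match t with
  | PLeaf x => if Y x then Some (PLeaf x, 0) else None
  | PNode l a r b =>
      match restrict Y l, restrict Y r with
      | Some (l', c), Some (r', d) => Some (PNode l' (a + c) r' (b + d), 0)
      | Some (l', c), None => Some (l', a + c)
      | None, Some (r', d) => Some (r', b + d)
      | None, None => None
      end
  end.

(* Induced subtree T_Y: at the root the pending length is discarded (a root of
   out-degree 1 is deleted together with its incident edge). [None] iff no
   leaf satisfies Y. *)
Definition induced (Y : pred nat) (t : ptree R) : option (ptree R) :=
  omap fst (restrict Y t).

Definition FPo (ot : option (ptree R)) (x : nat) : R :=
  if ot is Some t then FP t x else 0.

Definition is_leaf (t : ptree R) (x : nat) : bool :=
  if t is PLeaf y then y == x else false.

Fixpoint cherry (t : ptree R) (x y : nat) : bool :=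
  match t with
  | PLeaf _ => false
  | PNode l _ r _ =>
      ((is_leaf l x && is_leaf r y) || (is_leaf l y && is_leaf r x))
      || cherry l x y || cherry r x y
  end.

End PTree.

From mathcomp Require Import all_boot all_order all_algebra.
From mathcomp Require Import lra.
Import Order.TTheory GRing.Theory Num.Theory.
Local Open Scope ring_scope.
Set Implicit Arguments. Unset Strict Implicit.

(* The two leaves x, y of a cherry share their whole
   root path except for the two pendant edges, so FP_T(x) - FP_T(y) only
   depends on those two edges.  If neither leaf is deleted, the cherry
   survives in the induced subtree with the same pendant edges, while every
   other edge on the common path is merely shortened or merged; hence
   FP_{T~}(x) - FP_{T~}(y) = FP_T(x) - FP_T(y).  As the ranking is strict this
   difference is nonzero, so the order of x and y is preserved in T~,
   contradicting reversibility. *)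

Section CherryRestriction.
Variable R : realFieldType.
Implicit Types (t : ptree R) (Y : pred nat).

Lemma is_leafE t x : is_leaf t x -> t = PLeaf x.
Proof. by case: t => //= y /eqP ->. Qed.

Lemma root_cherryE (l r : ptree R) x y :
  (is_leaf l x && is_leaf r y) || (is_leaf l y && is_leaf r x) ->
  (l = PLeaf x /\ r = PLeaf y) \/ (l = PLeaf y /\ r = PLeaf x).
Proof.
by case/orP=> /andP[/is_leafE -> /is_leafE ->]; [left | right].
Qed.

Lemma cherry_mem t x y : cherry t x y -> (x \in leaves t) && (y \in leaves t).
Proof.
elim: t => //= l IHl a r IHr b /orP[/orP[/root_cherryE|/IHl]|/IHr].
- by case=> -[-> ->]; rewrite !mem_cat !inE !eqxx ?orbT.
- by rewrite !mem_cat => /andP[-> ->].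
- by rewrite !mem_cat => /andP[-> ->]; rewrite !orbT.
Qed.

Lemma cherry_neq t x y : uniq (leaves t) -> cherry t x y -> x != y.
Proof.
elim: t => //= l IHl a r IHr b; rewrite cat_uniq => /and3P[ul dis ur].
case/orP=> [/orP[/root_cherryE|/(IHl ul)//]|/(IHr ur)//].
by case=> -[El Er]; move: dis; rewrite El Er /= orbF inE // eq_sym.
Qed.

Lemma restrict_sub Y t t' c :
  restrict Y t = Some (t', c) -> {subset leaves t' <= leaves t}.
Proof.
elim: t t' c => [x|l IHl a r IHr b] t' c /=; first by case: (Y x) => // -[<- _].
case El: (restrict Y l) => [[l' c1]|]; case Er: (restrict Y r) => [[r' d]|] //.
- by case=> <- _ z /=; rewrite !mem_cat => /orP[/(IHl _ _ El)|/(IHr _ _ Er)] ->;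
    rewrite ?orbT.
- by case=> <- _ z /(IHl _ _ El); rewrite mem_cat => ->.
- by case=> <- _ z /(IHr _ _ Er); rewrite mem_cat => ->; rewrite orbT.
Qed.

Lemma restrict_cherry_FP_diff Y t x y :
  uniq (leaves t) -> cherry t x y -> Y x -> Y y ->
  exists t' c, [/\ restrict Y t = Some (t', c), x \in leaves t', y \in leaves t'
    & FP t' x - FP t' y = FP t x - FP t y].
Proof.
move=> + + Yx Yy; elim: t => //= l IHl a r IHr b.
rewrite cat_uniq => /and3P[ul dis ur].
case/orP=> [/orP[root|ch]|ch].
- have [[El Er]|[El Er]] := root_cherryE root; move: dis;
    rewrite El Er /= Yx Yy !addr0 orbF inE => /negbTE neq.
  + by exists (PNode (PLeaf x) a (PLeaf y) b), 0; rewrite /= !inE !eqxx neq !addr0.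
  + by exists (PNode (PLeaf y) a (PLeaf x) b), 0; rewrite /= !inE !eqxx neq !addr0.
- have /andP[xl yl] := cherry_mem ch.
  have [l' [c [El xl' yl' Hd]]] := IHl ul ch.
  rewrite El xl yl; case Er: (restrict Y r) => [[r' d]|].
  + exists (PNode l' (a + c) r' (b + d)), 0.
    by rewrite /= !mem_cat xl' yl'; split=> //; lra.
  + by exists l', (a + c); split => //; lra.
- have /andP[xr yr] := cherry_mem ch.
  have [r' [d [Er xr' yr' Hd]]] := IHr ur ch.
  have notl z : z \in leaves r -> z \notin leaves l.
    by move=> zr; apply/negP=> zl; move/hasP: dis; apply; exists z.
  rewrite Er (negbTE (notl _ xr)) (negbTE (notl _ yr)) xr yr.
  case El: (restrict Y l) => [[l' c]|].
  + have notl' z : z \in leaves r -> z \notin leaves l'.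
      by move=> /notl zl; apply/negP=> /(restrict_sub El); apply/negP.
    exists (PNode l' (a + c) r' (b + d)), 0.
    rewrite /= !mem_cat (negbTE (notl' _ xr)) (negbTE (notl' _ yr)) xr' yr'.
    by split; rewrite ?orbT //; lra.
  + by exists r', (b + d); split => //; lra.
Qed.

End CherryRestriction.

Theorem theorem1 (R : realFieldType) (T : ptree R) (X' : seq nat) :
  well_labelled T ->
  pos_lengths T ->
  (3 <= size (leaves T))%N ->
  (* X' is a proper subset of X *)
  {subset X' <= leaves T} ->
  (exists x, (x \in leaves T) && (x \notin X')) ->
  (* the ranking pi_T is strict *)
  (forall xi xj, xi \in leaves T -> xj \in leaves T -> xi != xj ->
     FP T xi != FP T xj) ->
  (* pi_T is reversible w.r.t. X', with tilde T = T restricted to X \ X' *)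
  (forall xi xj, xi \in leaves T -> xj \in leaves T ->
     xi \notin X' -> xj \notin X' -> xi != xj ->
     FP T xj < FP T xi ->
     FPo (induced [pred x | x \notin X'] T) xi <
     FPo (induced [pred x | x \notin X'] T) xj) ->
  forall xi xj, cherry T xi xj -> (xi \in X') || (xj \in X').
Proof.
move=> wl _ _ _ _ strict rev xi xj ch.
apply/negPn/negP; rewrite negb_or => /andP[nxi nxj].
have /andP[mi mj] := cherry_mem ch.
have ne := cherry_neq wl ch.
have [t' [c [E _ _ Hd]]] :=
  restrict_cherry_FP_diff (Y := [pred x | x \notin X']) wl ch nxi nxj.
have FPtilde z : FPo (induced [pred x | x \notin X'] T) z = FP t' z.
  by rewrite /induced E.
have := strict _ _ mi mj ne; rewrite neq_lt => /orP[lt_ij|lt_ji].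
- have := rev _ _ mj mi nxj nxi; rewrite eq_sym !FPtilde => /(_ ne lt_ij); lra.
- have := rev _ _ mi mj nxi nxj ne lt_ji; rewrite !FPtilde; lra.
Qed.
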